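(* Let $A$ and $B$ be nonempty proper subsets of $R_n$. Let $d_A^{\perp}$ be the minimum distance of the dual of the cyclic code of length $n$ over $\mathbb{F}_{q^d}$ with complete defining set $A$, and let $d_B$ be the minimum distance of the cyclic code of length $n$ over $\mathbb{F}_{q^d}$ with complete defining set $B$, and suppose $d_A^{\perp}\ge d_B$. If $C$ is a cyclic code of length $n$ over $\mathbb{F}_q$ whose complete defining set contains $AB$, then $C$ has $(d_A^{\perp}-d_B+1,\,d_B)$-locality.
   Context: Let $q$ be a prime power and $n$ a positive integer with $\gcd(n,q)=1$. Let $d$ be the multiplicative order of $q$ modulo $n$, $\alpha\in\mathbb{F}_{q^d}$ a primitive $n$-th root of unity, and $R_n=\{\alpha^j:0\le j\le n-1\}$. For $A,B\subseteq R_n$, $AB=\{\beta\gamma:\beta\in A,\gamma\in B\}$. For any $Z\subseteq R_n$, the cyclic code of length $n$ over $\mathbb{F}_{q^d}$ with complete defining set $Z$ is the ideal generated by $\prod_{\beta\in Z}(x-\beta)$ in $\mathbb{F}_{q^d}[x]/(x^n-1)$, identified with a subspace of $\mathbb{F}_{q^d}^n$ via coefficient vectors. A cyclic code of length $n$ over $\mathbb{F}_q$ is an ideal $\langle g(x)\rangle$ of $\mathbb{F}_q[x]/(x^n-1)$ with $g\mid x^n-1$ monic; its complete defining set is the set of roots of $g$ in $R_n$. Locality: for a linear code $C\subseteq\mathbb{F}^n$ and integers $r\ge1$, $\delta\ge2$, the $i$-th coordinate has $(r,\delta)$-locality if there is $S_i\subseteq\{1,\dots,n\}$ with $i\in S_i$,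 $|S_i|\le r+\delta-1$ such that the punctured code $C|_{S_i}$ (restrictions of codewords to $S_i$) has minimum distance at least $\delta$ (the zero code having infinite minimum distance); $C$ has $(r,\delta)$-locality if every coordinate does. *)

From HB Require Import structures.
From mathcomp Require Import all_boot all_order all_algebra all_field.
Set Implicit Arguments.
Unset Strict Implicit.
Unset Printing Implicit Defensive.
Import GRing.Theory.
Local Open Scope ring_scope.

Definition is_mult_order (n q d : nat) : Prop :=
  (0 < d)%N /\ (q ^ d = 1 %[mod n])%N /\
  (forall k : nat, (0 < k)%N -> (q ^ k = 1 %[mod n])%N -> (d <= k)%N).

Definition poly_of_vec (K : fieldType) (n : nat) (c : 'rV[K]_n) : {poly K} :=
  \sum_(i < n) c 0 i *: 'X^i.

(* the ideal <g> of K[x]/(x^n - 1), identified with coefficient vectors *)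
Definition ideal_code (K : fieldType) (n : nat) (g : {poly K}) : 'rV[K]_n -> Prop :=
  fun c => exists f : {poly K}, poly_of_vec c = (f * g) %% ('X^n - 1).
Arguments ideal_code {K} n g.

(* prod_{beta in Z} (x - beta), where Z = {alpha^j : j in Z'} subset of R_n
   is encoded by its set of exponents Z' : {set 'I_n} *)
Definition defpoly (L : fieldType) (n : nat) (alpha : L) (Z : {set 'I_n}) : {poly L} :=
  \prod_(j in Z) ('X - (alpha ^+ j)%:P).

Definition cyclic_code_defset (L : fieldType) (n : nat) (alpha : L) (Z : {set 'I_n})
  : 'rV[L]_n -> Prop := ideal_code n (defpoly alpha Z).

Definition dual_code (K : fieldType) (n : nat) (C : 'rV[K]_n -> Prop) : 'rV[K]_n -> Prop :=
  fun y => forall c, C c -> \sum_(i < n) y 0 i * c 0 i = 0.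

Definition wt (K : fieldType) (n : nat) (c : 'rV[K]_n) : nat := #|[set i | c 0 i != 0]|.

Definition is_min_dist (K : fieldType) (n : nat) (C : 'rV[K]_n -> Prop) (d : nat) : Prop :=
  (exists c, [/\ C c, c != 0 & wt c = d]) /\
  (forall c, C c -> c != 0 -> (d <= wt c)%N).

(* (r, delta)-locality: every coordinate i has a set S containing i with
   |S| <= r + delta - 1 such that the punctured code C|_S has minimum distance
   >= delta (every nonzero restriction has weight >= delta; zero code ok). *)
Definition has_locality (K : fieldType) (n : nat) (C : 'rV[K]_n -> Prop) (r delta : nat)
  : Prop :=
  forall i : 'I_n, exists S : {set 'I_n},
    [/\ i \in S, (#|S| <= r + delta - 1)%N &
        forall c, C c -> [exists j in S, c ord0 j != 0%R] ->
          (delta <= #|[set j in S | c ord0 j != 0%R]|)%N].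

From HB Require Import structures.
From mathcomp Require Import all_boot all_order all_algebra all_field.
Set Implicit Arguments.
Unset Strict Implicit.
Unset Printing Implicit Defensive.
Import GRing.Theory.
Local Open Scope ring_scope.

(* Identify a vector c with the polynomial c(x) = sum_i c_i x^i.
   (1) With alpha a primitive n-th root of unity, c lies in the cyclic code
       C_Z with defining set {alpha^z : z in Z} iff c(alpha^z) = 0 for z in Z.
   (2) A codeword c of <g>, g | x^n - 1, satisfies c(beta) = 0 at every root
       beta of g (taken in an extension field).
   (3) Hence if y is in the dual of C_A and c in <g>, where g vanishes on AB,
       then the componentwise product y * c lies in C_B: for b in B,
       (y * c)(alpha^b) = <y, (c_k alpha^(bk))_k> and the second vector lies
       in C_A by (2).  So c restricted to supp y, when nonzero, has at least
       d_B nonzero entries.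
   (4) Cyclic shifts preserve C_A, its dual and weights, so every coordinate
       i lies in the support of a dual codeword of weight d_A; that support
       is the repair set, of size d_A = (d_A - d_B + 1) + d_B - 1. *)

Definition supp (K : fieldType) (n : nat) (c : 'rV[K]_n) : {set 'I_n} :=
  [set i | c 0 i != 0].

Lemma nonzero_coord (K : fieldType) (n : nat) (c : 'rV[K]_n) :
  c != 0 -> exists i, c 0 i != 0.
Proof.
move=> c_nz; apply/existsP; apply: contraR c_nz; rewrite negb_exists => /forallP c0.
by apply/eqP/rowP => i; rewrite mxE; apply/eqP/negbNE/c0.
Qed.

Lemma horner_poly_of_vec (K : fieldType) (n : nat) (c : 'rV[K]_n) (x : K) :
  (poly_of_vec c).[x] = \sum_(i < n) c 0 i * x ^+ i.
Proof.
rewrite /poly_of_vec horner_sum; apply: eq_bigr => i _.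
by rewrite hornerZ hornerXn.
Qed.

Lemma size_poly_of_vec (K : fieldType) (n : nat) (c : 'rV[K]_n) :
  (size (poly_of_vec c) <= n)%N.
Proof.
apply: leq_trans (size_sum _ _ _) _; apply/bigmax_leqP => i _.
by apply: leq_trans (size_scale_leq _ _) _; rewrite size_polyXn.
Qed.

Lemma ideal_code_root (K L : fieldType) (f : {rmorphism K -> L}) (n : nat)
    (g : {poly K}) (c : 'rV[K]_n) (x : L) :
  g %| 'X^n - 1 -> ideal_code n g c -> root (map_poly f g) x ->
  \sum_(i < n) f (c 0 i) * x ^+ i = 0.
Proof.
move=> g_dvd [h c_def] gx0.
have /dvdpP [q c_eq] : g %| poly_of_vec c by rewrite c_def -dvdp_mod // dvdp_mull.
have cx0 : (map_poly f (poly_of_vec c)).[x] = 0.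
  by rewrite c_eq rmorphM /= hornerM (rootP gx0) mulr0.
rewrite -[RHS]cx0 /poly_of_vec rmorph_sum horner_sum; apply: eq_bigr => i _.
by rewrite /= map_polyZ map_polyXn hornerZ hornerXn.
Qed.

Section DefiningSets.
Variables (L : fieldType) (n : nat) (alpha : L).
Hypothesis alpha_prim : n.-primitive_root alpha.

Lemma root_unity_pow (a : nat) : (alpha ^+ a) ^+ n = 1.
Proof. by rewrite -exprM mulnC exprM (prim_expr_order alpha_prim) expr1n. Qed.

(* Step (1): membership in C_Z is vanishing at the points of the defining set.
   The converse direction uses that the alpha^z, z < n, are distinct. *)
Lemma cyclic_code_defsetP (Z : {set 'I_n}) (c : 'rV[L]_n) :
  cyclic_code_defset alpha Z c <->
  (forall z, z \in Z -> \sum_(i < n) c 0 i * (alpha ^+ z) ^+ i = 0).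
Proof.
split=> [[h c_def] z zZ | c_van].
  have Xn1_0 : ('X^n - 1 : {poly L}).[alpha ^+ z] = 0.
    by rewrite !hornerE root_unity_pow subrr.
  rewrite -horner_poly_of_vec c_def.
  have -> : ((h * defpoly alpha Z) %% ('X^n - 1)).[alpha ^+ z] =
            (h * defpoly alpha Z).[alpha ^+ z].
    by rewrite [in RHS](divp_eq (h * defpoly alpha Z) ('X^n - 1)) hornerD
      hornerM Xn1_0 mulr0 add0r.
  rewrite hornerM /defpoly horner_prod (bigD1 z) //=.
  by rewrite hornerD hornerX hornerN hornerC subrr mul0r mulr0.
have defpoly_dvd : defpoly alpha Z %| poly_of_vec c.
  rewrite /defpoly -big_enum /=.
  rewrite -(big_map (fun j : 'I_n => alpha ^+ j) xpredT (fun z => 'X - z%:P)).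
  apply: uniq_roots_dvdp.
    apply/allP => r /mapP [j]; rewrite mem_enum => jZ ->.
    by rewrite /root horner_poly_of_vec c_van.
  rewrite uniq_rootsE map_inj_in_uniq ?enum_uniq // => i j _ _ /eqP.
  rewrite (eq_prim_root_expr alpha_prim) !modn_small ?ltn_ord // => /eqP.
  exact: val_inj.
exists (poly_of_vec c %/ defpoly alpha Z); rewrite divpK // modp_small //.
by rewrite size_XnsubC ?ltnS ?size_poly_of_vec // (prim_order_gt0 alpha_prim).
Qed.

Lemma dual_mul_ideal_code (F : fieldType) (f : {rmorphism F -> L})
    (A B : {set 'I_n}) (g : {poly F}) (y : 'rV[L]_n) (c : 'rV[F]_n) :
  g %| 'X^n - 1 ->
  (forall a b : 'I_n, a \in A -> b \in B ->
     root (map_poly f g) (alpha ^+ a * alpha ^+ b)) ->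
  dual_code (cyclic_code_defset alpha A) y -> ideal_code n g c ->
  cyclic_code_defset alpha B (\row_k (y 0 k * f (c 0 k))).
Proof.
move=> g_dvd g_roots y_dual c_g; apply/cyclic_code_defsetP => b bB.
pose v : 'rV[L]_n := \row_k (f (c 0 k) * (alpha ^+ b) ^+ k).
have vA : cyclic_code_defset alpha A v.
  apply/cyclic_code_defsetP => a aA.
  rewrite -[RHS](ideal_code_root g_dvd c_g (g_roots a b aA bB)).
  by apply: eq_bigr => k _; rewrite mxE -mulrA -exprMn [alpha ^+ b * _]mulrC.
rewrite -[RHS](y_dual _ vA); apply: eq_bigr => k _.
by rewrite !mxE mulrA.
Qed.

Lemma dual_support_weight (F : fieldType) (f : {rmorphism F -> L})
    (A B : {set 'I_n}) (g : {poly F}) (dB : nat) (y : 'rV[L]_n) (c : 'rV[F]_n) :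
  g %| 'X^n - 1 ->
  (forall a b : 'I_n, a \in A -> b \in B ->
     root (map_poly f g) (alpha ^+ a * alpha ^+ b)) ->
  (forall w, cyclic_code_defset alpha B w -> w != 0 -> (dB <= wt w)%N) ->
  dual_code (cyclic_code_defset alpha A) y -> ideal_code n g c ->
  [exists j in supp y, c ord0 j != 0%R] ->
  (dB <= #|[set j in supp y | c ord0 j != 0%R]|)%N.
Proof.
move=> g_dvd g_roots dB_min y_dual c_g /existsP [j /andP [jy cj]].
set w := \row_k (y 0 k * f (c 0 k)).
have w_nz : w != 0.
  apply/eqP => /rowP /(_ j); rewrite !mxE; apply/eqP.
  by rewrite inE in jy; rewrite mulf_neq0 // fmorph_eq0.
apply: leq_trans (dB_min _ (dual_mul_ideal_code g_dvd g_roots y_dual c_g) w_nz) _.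
apply: subset_leq_card; apply/subsetP => k.
by rewrite !inE mxE mulf_eq0 negb_or fmorph_eq0.
Qed.

End DefiningSets.

Definition shift_vec (K : fieldType) (n : nat) (t : 'I_n.+1) (c : 'rV[K]_n.+1)
  : 'rV[K]_n.+1 := \row_m c 0 (m - t).

Lemma shift_vecE (K : fieldType) (n : nat) (t m : 'I_n.+1) (c : 'rV[K]_n.+1) :
  shift_vec t c 0 m = c 0 (m - t).
Proof. by rewrite mxE. Qed.

Lemma wt_shift_vec (K : fieldType) (n : nat) (t : 'I_n.+1) (c : 'rV[K]_n.+1) :
  wt (shift_vec t c) = wt c.
Proof.
rewrite /wt -!sum1_card [RHS](reindex_inj (addIr (- t))) /=.
by apply: eq_bigl => k; rewrite !inE shift_vecE.
Qed.

Lemma horner_shift_vec (K : fieldType) (n : nat) (t : 'I_n.+1) (c : 'rV[K]_n.+1)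
    (x : K) :
  x ^+ n.+1 = 1 ->
  \sum_(k < n.+1) shift_vec t c 0 k * x ^+ k =
  x ^+ t * \sum_(k < n.+1) c 0 k * x ^+ k.
Proof.
move=> xn1; rewrite (reindex_inj (addIr t)) mulr_sumr /=.
apply: eq_bigr => k _; rewrite shift_vecE addrK.
by rewrite expr_mod // exprD mulrA mulrC.
Qed.

Lemma dot_shift_vec (K : fieldType) (n : nat) (t : 'I_n.+1) (y c : 'rV[K]_n.+1) :
  \sum_(k < n.+1) shift_vec t y 0 k * c 0 k =
  \sum_(k < n.+1) y 0 k * shift_vec (- t) c 0 k.
Proof.
rewrite (reindex_inj (addIr t)) /=; apply: eq_bigr => k _.
by rewrite !shift_vecE addrK opprK.
Qed.

Section ShiftInvariance.
Variables (L : fieldType) (n : nat) (alpha : L) (Z : {set 'I_n.+1}).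
Hypothesis alpha_prim : n.+1.-primitive_root alpha.

Lemma shift_cyclic_code (t : 'I_n.+1) (c : 'rV[L]_n.+1) :
  cyclic_code_defset alpha Z c -> cyclic_code_defset alpha Z (shift_vec t c).
Proof.
move=> /(cyclic_code_defsetP alpha_prim) c_van.
apply/(cyclic_code_defsetP alpha_prim) => z zZ.
by rewrite horner_shift_vec ?(root_unity_pow alpha_prim) // c_van // mulr0.
Qed.

Lemma shift_dual_cyclic_code (t : 'I_n.+1) (y : 'rV[L]_n.+1) :
  dual_code (cyclic_code_defset alpha Z) y ->
  dual_code (cyclic_code_defset alpha Z) (shift_vec t y).
Proof.
move=> y_dual c cZ; rewrite dot_shift_vec.
exact/y_dual/shift_cyclic_code.
Qed.

End ShiftInvariance.

(* The hypotheses on q, d, the field L and nonemptiness of A, B describe the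
   setting of the paper; the argument only needs alpha to be a primitive n-th
   root of unity, the minimum-distance data and g | x^n - 1 vanishing on AB. *)
Theorem theorem3p3 (F : finFieldType) (L : fieldExtType F) (n d : nat) (alpha : L)
    (A B : {set 'I_n}) (dA dB : nat) (g : {poly F}) :
  (0 < n)%N -> coprime n #|F| ->
  is_mult_order n #|F| d -> \dim {:L} = d ->
  n.-primitive_root alpha ->
  A != set0 -> A != setT -> B != set0 -> B != setT ->
  is_min_dist (dual_code (cyclic_code_defset alpha A)) dA ->
  is_min_dist (cyclic_code_defset alpha B) dB ->
  (dB <= dA)%N ->
  g \is monic -> g %| 'X^n - 1 ->
  (forall i j : 'I_n, i \in A -> j \in B ->
     root (map_poly (in_alg L) g) (alpha ^+ i * alpha ^+ j)) ->
  has_locality (ideal_code n g) (dA - dB + 1) dB.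
Proof.
case: n A B => [//|n] A B _ _ _ _ prim _ _ _ _ [[y0 [y0_dual y0_nz y0_wt]] _]
  [_ dB_min] dB_le_dA _ g_dvd g_roots i.
have [s y0s] := nonzero_coord y0_nz.
(* shift a minimum-weight dual codeword so that its support contains i *)
pose y := shift_vec (i - s) y0.
have y_dual := shift_dual_cyclic_code prim (i - s) y0_dual.
exists (supp y); split.
- by rewrite inE shift_vecE opprB addrC subrK.
- by rewrite -[#|supp y|]/(wt y) wt_shift_vec y0_wt addnAC addnK subnK.
- move=> c c_g; exact: (dual_support_weight prim g_dvd g_roots dB_min y_dual c_g).
Qed.
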